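(* Let $\Gamma_1=\langle S_1\mid R_1\rangle$ and $\Gamma_2=\langle S_2\mid R_2\rangle$ be discrete groups such that the path metric on the Cayley graph $\mathrm{Cay}(\Gamma_i,S_i)$ is conditionally strictly negative definite for $i=1,2$. Then the path metric on $\mathrm{Cay}(\Gamma_1\ast\Gamma_2,S_1\cup S_2)$ is conditionally strictly negative definite.
   Context: $\Gamma_1\ast\Gamma_2$ is the free product of groups. $\mathrm{Cay}(\Gamma,S)$ is the graph with vertex set $\Gamma$ and edges $\{g,gs\}$, $s\in S\cup S^{-1}$, $gs\ne g$; its path metric is the shortest-path distance. A symmetric real function $K$ on $\Gamma\times\Gamma$ is conditionally strictly negative definite if for every finitely supported $\lambda\colon\Gamma\to\mathbb{C}$, $\lambda\neq0$, with $\sum_g\lambda(g)=0$ one has $\sum_{g,h}\lambda(g)\overline{\lambda(h)}K(g,h)<0$. *)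

From HB Require Import structures.
From mathcomp Require Import all_boot all_order all_algebra.
From mathcomp Require Import boolp reals Rstruct complex.
Set Implicit Arguments. Unset Strict Implicit. Unset Printing Implicit Defensive.
Import Order.TTheory GRing.Theory Num.Theory.

Notation CC := (complex Rdefinitions.R).

Definition in_generated_subgroup (G : groupType) (S : G -> Prop) (g : G) : Prop :=
  forall P : G -> Prop,
    (forall s, S s -> P s) ->
    P (1%g : G) ->
    (forall x y, P x -> P y -> P ((x * y)%g)) ->
    (forall x, P x -> P ((x^-1)%g)) ->
    P g.

Definition generates (G : groupType) (S : G -> Prop) : Prop :=
  forall g : G, in_generated_subgroup S g.

Definition is_free_product (G1 G2 G : groupType) (i1 : G1 -> G) (i2 : G2 -> G) : Prop :=
  monoid.monoid_morphism i1 /\ monoid.monoid_morphism i2 /\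
  forall (H : groupType) (f1 : G1 -> H) (f2 : G2 -> H),
    monoid.monoid_morphism f1 -> monoid.monoid_morphism f2 ->
    exists! f : G -> H,
      monoid.monoid_morphism f /\ (forall x, f (i1 x) = f1 x) /\ (forall x, f (i2 x) = f2 x).

Definition cay_adj (G : groupType) (S : G -> Prop) (g h : G) : Prop :=
  g <> h /\ exists s, S s /\ (h = (g * s)%g \/ h = (g * s^-1)%g).

Fixpoint cay_walk (G : groupType) (S : G -> Prop) (x : G) (p : seq G) : Prop :=
  match p with
  | [::] => True
  | y :: p' => cay_adj S x y /\ cay_walk S y p'
  end.

Definition cay_walk_len (G : groupType) (S : G -> Prop) (g h : G) (n : nat) : Prop :=
  exists p : seq G, size p = n /\ cay_walk S g p /\ last g p = h.

(* Path metric (shortest-path distance); set to 0 if g, h are not connected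
   (this never happens when S generates G). *)
Definition cay_dist (G : groupType) (S : G -> Prop) (g h : G) : nat :=
  match pselect (exists n, cay_walk_len S g h n) with
  | left ex =>
      @ex_minn (fun n => `[< cay_walk_len S g h n >])
        (let: ex_intro n Hn := ex in ex_intro _ n (asboolT Hn))
  | right _ => 0%N
  end.

Local Open Scope ring_scope.

Definition cond_strict_neg_def (T : eqType) (K : T -> T -> Rdefinitions.R) : Prop :=
  (forall x y, K x y = K y x) /\
  forall (lam : T -> CC) (supp : seq T),
    uniq supp ->
    (forall x, x \notin supp -> lam x = 0) ->
    (exists x, lam x != 0) ->
    \sum_(x <- supp) lam x = 0 ->
    \sum_(x <- supp) \sum_(y <- supp) lam x * (lam y)^* * real_complex Rdefinitions.R (K x y) < 0.

Definition cay_metric (G : groupType) (S : G -> Prop) (g h : G) : Rdefinitions.R :=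
  (cay_dist S g h)%:R.

From HB Require Import structures.
From mathcomp Require Import all_boot all_order all_algebra.
From mathcomp Require Import boolp reals Rstruct complex.
Set Implicit Arguments. Unset Strict Implicit. Unset Printing Implicit Defensive.
Import Order.TTheory GRing.Theory Num.Theory.

(* Every element of the free product has a unique reduced word, its normal
   form, obtained from the action of the free product on reduced words.  Index
   the letters of a normal form by the part of the word that follows them.  A
   geodesic changes one letter at a time, which shows that the distance between
   g and h is the sum, over all such indices p, of the distances in G1 and in G2
   between the letters of g and of h at p (1 when absent).  The quadratic form
   of lambda therefore splits into quadratic forms of the factors evaluated on
   pushforwards of lambda, all nonpositive; for the tail p of a longest normal
   form x of nonzero weight, the pushforward takes the value lambda(x) at the
   letter of x, so that block is negative. *)

Lemma monoid_morphism_comp (A B C : groupType) (f : A -> B) (g : B -> C) :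
  monoid.monoid_morphism f -> monoid.monoid_morphism g ->
  monoid.monoid_morphism (g \o f).
Proof. by move=> [f1 fM] [g1 gM]; split=> [|x y] /=; rewrite ?f1 ?g1 ?fM ?gM. Qed.

Lemma monoid_morphismV (A B : groupType) (f : A -> B) :
  monoid.monoid_morphism f -> {morph f : x / (x^-1)%g}.
Proof. by move=> [f1 fM] x; apply/esym/mulg1_eq; rewrite -fM mulgV f1. Qed.

Lemma big_subset_seq (I : eqType) (R : Type) (idx : R) (op : Monoid.com_law idx)
    (L K : seq I) (F : I -> R) :
  uniq L -> uniq K -> {subset K <= L} -> (forall p, p \notin K -> F p = idx) ->
  \big[op/idx]_(p <- L) F p = \big[op/idx]_(p <- K) F p.
Proof.
move=> uL uK sKL F0.
have pe : perm_eq [seq p <- L | p \in K] K.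
  apply: uniq_perm; rewrite ?filter_uniq // => p.
  by rewrite mem_filter; case: (boolP (p \in K)) => // /sKL ->.
rewrite -(perm_big _ pe) big_filter [RHS]big_mkcond.
by apply: eq_bigr => p _; case: ifP => // /negbT /F0.
Qed.

Lemma big_seq_only (I : eqType) (R : Type) (idx : R) (op : Monoid.com_law idx)
    (L : seq I) (F : I -> R) p0 :
  uniq L -> (forall p, p != p0 -> F p = idx) ->
  \big[op/idx]_(p <- L) F p = if p0 \in L then F p0 else idx.
Proof.
move=> uL F0; case: ifP => [inL|/negbT nL].
  by rewrite (bigD1_seq p0) //= big1 ?Monoid.mulm1.
by rewrite big1_seq // => p /andP [_ pL]; apply: F0; apply: contraNneq nL => <-.
Qed.

Lemma partition_big_undup (T U : eqType) (R : Type) (idx : R) (op : Monoid.com_law idx)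
    (f : T -> U) (s : seq T) (F : T -> R) :
  \big[op/idx]_(x <- s) F x =
  \big[op/idx]_(a <- undup (map f s)) \big[op/idx]_(x <- s | f x == a) F x.
Proof.
under [RHS]eq_bigr => a _ do rewrite big_mkcond.
rewrite exchange_big /= [LHS]big_seq [RHS]big_seq; apply: eq_bigr => x xs.
rewrite (@big_seq_only _ _ _ _ _ _ (f x)) ?undup_uniq ?mem_undup ?map_f ?eqxx //.
by move=> a ne; rewrite eq_sym (negbTE ne).
Qed.

Lemma seq_argmax (T : eqType) (g : T -> nat) (s : seq T) x0 : x0 \in s ->
  exists2 x, x \in s & {in s, forall y, (g y <= g x)%N}.
Proof.
elim: s x0 => [//|z [|z' s] IH] x0 _.
  by exists z; rewrite ?mem_head // => y /[!inE] /eqP ->.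
have [x xs mx] := IH z' (mem_head _ _).
have [le|lt] := leqP (g z) (g x).
  exists x; first by rewrite in_cons xs orbT.
  by move=> y /[1!in_cons] /predU1P [->|/mx].
exists z => [|y /[1!in_cons] /predU1P [->//|/mx le]]; first exact: mem_head.
exact: leq_trans le (ltnW lt).
Qed.

Section BijectionGroup.
Local Open Scope group_scope.
Variable X : Type.

Record bij := Bij {
  bij_fun : X -> X; bij_inv : X -> X;
  bij_funK : cancel bij_fun bij_inv; bij_invK : cancel bij_inv bij_fun }.
HB.instance Definition _ := gen_eqMixin bij.
HB.instance Definition _ := gen_choiceMixin bij.

Lemma bij_eq p q : bij_fun p =1 bij_fun q -> p = q.
Proof.
case: p => f fi fK fKV; case: q => g gi gK gKV /= /funext efg; subst g.
have efi : fi = gi by apply: funext => x; rewrite -{1}(gKV x) fK.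
by subst gi; rewrite (Prop_irrelevance fK gK) (Prop_irrelevance fKV gKV).
Qed.

Definition bij_one := @Bij id id (fun _ => erefl) (fun _ => erefl).

Definition bij_mul p q := @Bij (bij_fun q \o bij_fun p) (bij_inv p \o bij_inv q)
  (fun x => etrans (f_equal _ (bij_funK q _)) (bij_funK p x))
  (fun x => etrans (f_equal _ (bij_invK p _)) (bij_invK q x)).

Definition bij_invg p := @Bij (bij_inv p) (bij_fun p) (bij_invK p) (bij_funK p).

Lemma bij_mulA : associative bij_mul. Proof. by move=> p q r; apply: bij_eq. Qed.
Lemma bij_mul1 : left_id bij_one bij_mul. Proof. by move=> p; apply: bij_eq. Qed.
Lemma bij_mulg1 : right_id bij_one bij_mul. Proof. by move=> p; apply: bij_eq. Qed.
Lemma bij_mulV : left_inverse bij_one bij_invg bij_mul.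
Proof. by move=> p; apply: bij_eq => x /=; rewrite bij_invK. Qed.
Lemma bij_mulgV : right_inverse bij_one bij_invg bij_mul.
Proof. by move=> p; apply: bij_eq => x /=; rewrite bij_funK. Qed.

HB.instance Definition _ :=
  isGroup.Build bij bij_mulA bij_mul1 bij_mulg1 bij_mulV bij_mulgV.

End BijectionGroup.

(** * Cayley graphs *)

Section CayleyGraph.
Local Open Scope group_scope.
Variables (G : groupType) (S : G -> Prop).

Lemma cay_adj_sym g h : cay_adj S g h -> cay_adj S h g.
Proof.
case=> ne [s [Ss E]]; split; first by move=> e; apply: ne; rewrite e.
exists s; split=> //; case: E => ->; [right|left]; by rewrite ?mulgK ?mulgVK.
Qed.

Lemma cay_walk_len0 g : cay_walk_len S g g 0.
Proof. by exists [::]. Qed.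

Lemma cay_walk_len0E g h : cay_walk_len S g h 0 -> h = g.
Proof. by case=> p [sp [_ <-]]; case: p sp. Qed.

Lemma cay_walk_lenS g z h n :
  cay_adj S g z -> cay_walk_len S z h n -> cay_walk_len S g h n.+1.
Proof. by move=> a [p [sp [wp lp]]]; exists (z :: p); rewrite /= sp. Qed.

Lemma cay_walk_lenSE g h n :
  cay_walk_len S g h n.+1 -> exists z, cay_adj S g z /\ cay_walk_len S z h n.
Proof.
by case=> -[|z p] [//= [sp] [[a wp] lp]]; exists z; split=> //; exists p.
Qed.

Lemma cay_walk_len1 g h : cay_adj S g h -> cay_walk_len S g h 1.
Proof. by move=> a; apply: cay_walk_lenS a (cay_walk_len0 _). Qed.

Lemma cay_walk_len_trans g z h m n :
  cay_walk_len S g z m -> cay_walk_len S z h n -> cay_walk_len S g h (m + n).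
Proof.
elim: m g => [|m IH] g; first by move/cay_walk_len0E->.
by case/cay_walk_lenSE=> y [a w] w2; rewrite addSn; apply: cay_walk_lenS a (IH _ w w2).
Qed.

Lemma cay_walk_len_sym g h n : cay_walk_len S g h n -> cay_walk_len S h g n.
Proof.
elim: n g => [|n IH] g; first by move/cay_walk_len0E->; apply: cay_walk_len0.
case/cay_walk_lenSE=> z [a w]; rewrite -addn1.
exact: cay_walk_len_trans (IH _ w) (cay_walk_len1 (cay_adj_sym a)).
Qed.

Lemma cay_dist_spec g h : (exists n, cay_walk_len S g h n) ->
  cay_walk_len S g h (cay_dist S g h) /\
  forall n, cay_walk_len S g h n -> (cay_dist S g h <= n)%N.
Proof.
rewrite /cay_dist; case: pselect => [ex|//] _.
case: ex_minnP => m /asboolP Hm Hmin; split=> // n wn.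
by apply: Hmin; apply/asboolP.
Qed.

Lemma cay_dist_min g h n : cay_walk_len S g h n -> (cay_dist S g h <= n)%N.
Proof. by move=> w; apply: (proj2 (cay_dist_spec (ex_intro _ n w))). Qed.

Lemma cay_dist_sym g h : cay_dist S g h = cay_dist S h g.
Proof.
have [ex|nex] := pselect (exists n, cay_walk_len S g h n).
  have ex' : exists n, cay_walk_len S h g n.
    by case: ex => n w; exists n; apply: cay_walk_len_sym.
  case: (cay_dist_spec ex) => w1 m1; case: (cay_dist_spec ex') => w2 m2.
  by apply/eqP; rewrite eqn_leq m1 ?m2 //; apply: cay_walk_len_sym.
have nex' : ~ exists n, cay_walk_len S h g n.
  by case=> n w; apply: nex; exists n; apply: cay_walk_len_sym.
by rewrite /cay_dist; do 2!case: pselect => //.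
Qed.

Lemma cay_dist_xx g : cay_dist S g g = 0%N.
Proof. by apply/eqP; rewrite -leqn0; apply: cay_dist_min (cay_walk_len0 g). Qed.

Lemma cay_dist_mul_le1 g s : S s ->
  (cay_dist S g (g * s) <= 1)%N /\ (cay_dist S g (g * s^-1) <= 1)%N.
Proof.
move=> Ss; have step h : h = g * s \/ h = g * s^-1 -> (cay_dist S g h <= 1)%N.
  move=> hgs; have [<-|ne] := eqVneq g h; first by rewrite cay_dist_xx.
  by apply: cay_dist_min; apply: cay_walk_len1; split; [apply/eqP | exists s].
by split; apply: step; [left|right].
Qed.

End CayleyGraph.

Lemma cay_walk_len_map (G G' : groupType) (S : G -> Prop) (S' : G' -> Prop)
    (f : G -> G') : injective f ->
  (forall u s, S s -> exists2 t, S' t &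
     f (u * s)%g = (f u * t)%g /\ f (u * s^-1)%g = (f u * t^-1)%g) ->
  forall g h n, cay_walk_len S g h n -> cay_walk_len S' (f g) (f h) n.
Proof.
move=> finj fadj g h n; elim: n g => [|n IH] g.
  by move/cay_walk_len0E->; apply: cay_walk_len0.
case/cay_walk_lenSE=> z [[ne [s [Ss E]]] w].
apply: (cay_walk_lenS (z := f z)) (IH _ w); split; first by move/finj.
have [t S't [e1 e2]] := fadj g s Ss.
by exists t; split=> //; case: E => ->; [left|right].
Qed.

Lemma cay_walk_len_mull (G : groupType) (S : G -> Prop) (c g h : G) n :
  cay_walk_len S g h n -> cay_walk_len S (c * g)%g (c * h)%g n.
Proof.
apply: cay_walk_len_map; first exact: mulgI.
by move=> u s Ss; exists s; rewrite ?mulgA.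
Qed.

Lemma cay_walk_len_morph (H G : groupType) (SH : H -> Prop) (S : G -> Prop) (i : H -> G) :
    monoid.monoid_morphism i -> injective i -> (forall s, SH s -> S (i s)) ->
  forall g a b n, cay_walk_len SH a b n -> cay_walk_len S (g * i a)%g (g * i b)%g n.
Proof.
move=> im iinj iS g; apply: cay_walk_len_map => [u v /mulgI /iinj //|u s Ss].
exists (i s); first exact: iS.
by split; rewrite /= im.2 ?(monoid_morphismV im) mulgA.
Qed.

Section GeneratedCayleyGraph.
Local Open Scope group_scope.
Variables (G : groupType) (S : G -> Prop).
Hypothesis genS : generates S.

Lemma cay_connected g h : exists n, cay_walk_len S g h n.
Proof.
suff from1 : forall x, exists n, cay_walk_len S 1 x n.
  have [n w] := from1 (g^-1 * h); exists n.
  by move: (cay_walk_len_mull g w); rewrite mulg1 mulVKg.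
move=> x; apply: (@genS x (fun x => exists n, cay_walk_len S 1 x n)).
- move=> s Ss; rewrite -[s]mul1g; have [<-|ne] := eqVneq 1 (1 * s).
    by exists 0%N; apply: cay_walk_len0.
  by exists 1%N; apply: cay_walk_len1; split; [apply/eqP | exists s; split=> //; left].
- by exists 0%N; apply: cay_walk_len0.
- move=> y z [m wm] [n wn]; exists (m + n)%N; apply: cay_walk_len_trans wm _.
  by move: (cay_walk_len_mull y wn); rewrite mulg1.
- move=> y [n wn]; exists n; apply: cay_walk_len_sym.
  by move: (cay_walk_len_mull y^-1 wn); rewrite mulg1 mulVg.
Qed.

Lemma cay_dist_walk g h : cay_walk_len S g h (cay_dist S g h).
Proof. exact: (proj1 (cay_dist_spec (cay_connected g h))). Qed.

Lemma cay_dist_triangle g z h :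
  (cay_dist S g h <= cay_dist S g z + cay_dist S z h)%N.
Proof. exact/cay_dist_min/cay_walk_len_trans/cay_dist_walk/cay_dist_walk. Qed.

End GeneratedCayleyGraph.

(** * Reduced words *)

Section Words.
Variables (G1 G2 : groupType).

Definition letter := (G1 + G2)%type.

Definition nontrivial_letter (l : letter) :=
  match l with inl a => a != 1%g | inr b => b != 1%g end.

Definition same_factor (l l' : letter) :=
  match l, l' with inl _, inl _ | inr _, inr _ => true | _, _ => false end.

Fixpoint reduced (w : seq letter) :=
  if w is l :: w' then
    [&& nontrivial_letter l, (if w' is l' :: _ then ~~ same_factor l l' else true)
      & reduced w']
  else true.

(* Letters of different words are compared through the suffix that follows
   them. *)
Fixpoint suffixes (w : seq letter) :=
  if w is _ :: w' then w' :: suffixes w' else [::].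

Lemma reduced_behead l w : reduced (l :: w) -> reduced w.
Proof. by case/and3P. Qed.

Definition prj1 (l : letter) : option G1 := if l is inl a then Some a else None.
Definition prj2 (l : letter) : option G2 := if l is inr b then Some b else None.

Lemma prj1K a : prj1 (inl a) = Some a. Proof. by []. Qed.
Lemma prj2K b : prj2 (inr b) = Some b. Proof. by []. Qed.
Lemma prj1_someK l a : prj1 l = Some a -> l = inl a. Proof. by case: l => //= ? [->]. Qed.
Lemma prj2_someK l b : prj2 l = Some b -> l = inr b. Proof. by case: l => //= ? [->]. Qed.
Lemma nontrivial_inl a : nontrivial_letter (inl a) = (a != 1%g). Proof. by []. Qed.
Lemma nontrivial_inr b : nontrivial_letter (inr b) = (b != 1%g). Proof. by []. Qed.
Lemma same_factor_inl a l : same_factor (inl a) l = (prj1 l != None).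
Proof. by case: l. Qed.
Lemma same_factor_inr b l : same_factor (inr b) l = (prj2 l != None).
Proof. by case: l. Qed.
Lemma prj2_inl a : prj2 (inl a) = None. Proof. by []. Qed.
Lemma prj1_inr b : prj1 (inr b) = None. Proof. by []. Qed.

Definition rword := {w : seq letter | reduced w}.
Definition rword_nil : rword := exist _ [::] erefl.

End Words.
Arguments prj1 {G1 G2}. Arguments prj2 {G1 G2}.
Arguments rword : clear implicits.

(* [coord prj p w] is the letter of [w] directly followed by the suffix [p],
   read in a factor through [prj]; it is 1 when there is no such letter or it
   lies in the other factor. *)
Definition coord (G1 G2 H : groupType) (prj : letter G1 G2 -> option H) :=
  fix coord (p w : seq (letter G1 G2)) : H :=
  if w is c :: w' then
    if w' == p then (if prj c is Some a then a else 1%g) else coord p w'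
  else 1%g.

Section Coordinates.
Local Open Scope group_scope.
Variables (G1 G2 H : groupType) (prj : letter G1 G2 -> option H).

Lemma coord_small p w : (size w <= size p)%N -> coord prj p w = 1.
Proof.
elim: w => [//|c w IH] /= le; rewrite IH ?(ltnW le) //.
by case: eqP le => // ->; rewrite ltnn.
Qed.

Lemma coord_self p : coord prj p p = 1.
Proof. exact: coord_small. Qed.

Lemma coord_cons_none c p w : prj c = None -> coord prj p (c :: w) = coord prj p w.
Proof. by move=> /= ->; case: eqP => // ->; rewrite coord_self. Qed.

Lemma coord_cons_neq c p w : p != w -> coord prj p (c :: w) = coord prj p w.
Proof. by rewrite /= eq_sym => /negbTE ->. Qed.

Lemma coord_notin p w : p \notin suffixes w -> coord prj p w = 1.
Proof.
elim: w => [//|c w IH]; rewrite in_cons negb_or => /andP [ne ni].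
by rewrite coord_cons_neq // IH.
Qed.

Lemma coord_neq1 p w : coord prj p w != 1 ->
  exists u c, w = u ++ c :: p /\ prj c = Some (coord prj p w).
Proof.
elim: w => [|c w IH] /=; first by rewrite eqxx.
have [->|_] := eqVneq w p.
  by case E: (prj c) => [a|]; [exists [::], c | rewrite eqxx].
by case/IH => u [c' [-> e]]; exists (c :: u), c'.
Qed.

End Coordinates.

Section FactorAction.
Local Open Scope group_scope.
Variables (G1 G2 H : groupType).
Variables (inj : H -> letter G1 G2) (prj : letter G1 G2 -> option H).
Hypotheses (prjK : forall a, prj (inj a) = Some a)
  (prj_someK : forall l a, prj l = Some a -> l = inj a)
  (nontrivial_inj : forall a, nontrivial_letter (inj a) = (a != 1))
  (same_factor_inj : forall a l, same_factor (inj a) l = (prj l != None)).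

(* Words are stored last letter first, so right multiplication acts on the head. *)
Definition mulw (w : seq (letter G1 G2)) (a : H) :=
  if a == 1 then w else
  match w with
  | c :: w' => match prj c with
               | Some b => if b * a == 1 then w' else inj (b * a) :: w'
               | None => inj a :: w
               end
  | [::] => [:: inj a]
  end.

Lemma mulw1 w : mulw w 1 = w.
Proof. by rewrite /mulw eqxx. Qed.

Lemma reduced_mulw w a : reduced w -> reduced (mulw w a).
Proof.
rewrite /mulw; case: eqP => // /eqP a1.
case: w => [|c w] /=; first by rewrite nontrivial_inj a1.
case E: (prj c) => [b|]; last by move=> r; rewrite /= nontrivial_inj a1 same_factor_inj E.
case: eqP => [_|/eqP ba]; first by case/and3P.
rewrite (prj_someK E) /= !nontrivial_inj ba => /and3P [_ ns ->]; rewrite andbT.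
by case: w ns => [|c' w] //; rewrite !same_factor_inj.
Qed.

Lemma mulwM w a b : reduced w -> mulw w (a * b) = mulw (mulw w a) b.
Proof.
move=> rw; rewrite /mulw.
have [->|a1] := eqVneq a 1; first by rewrite mul1g.
have [->|b1] := eqVneq b 1; first by rewrite mulg1 (negbTE a1).
case: w rw => [|c w] rw /=; first by rewrite prjK.
case E: (prj c) => [d|]; last by rewrite prjK.
have ec := prj_someK E.
have d1 : d != 1 by move: rw; rewrite ec /= nontrivial_inj => /and3P [].
have hw : if w is c' :: _ then prj c' = None else True.
  case: w rw => [|c' w] //= /and3P [_ ns _]; move: ns.
  by rewrite ec same_factor_inj; case: (prj c').
have [da|da] := eqVneq (d * a) 1.
  rewrite -(mulg1_eq da) mulgA mulgV mul1g (negbTE b1).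
  have [db|db] := eqVneq (d^-1 * b) 1.
    have eb : b = d by rewrite -(mulg1_eq db) invgK.
    by case: w hw {rw} => [|c' w] /= => [_|->]; rewrite eb ec.
  by case: w hw {rw} => [|c' w] /= => [_|->].
rewrite prjK !mulgA; have [ab|//] := eqVneq (a * b) 1.
by rewrite -mulgA ab mulg1 (negbTE d1) ec.
Qed.

Lemma coord_mulw w s : exists p0,
  coord prj p0 (mulw w s) = coord prj p0 w * s /\
  forall p, p != p0 -> coord prj p (mulw w s) = coord prj p w.
Proof.
rewrite /mulw; case: eqP => [->|/eqP s1]; first by exists [::]; rewrite mulg1.
have push : exists p0, coord prj p0 (inj s :: w) = coord prj p0 w * s /\
    forall p, p != p0 -> coord prj p (inj s :: w) = coord prj p w.
  exists w; split; first by rewrite /= eqxx prjK coord_self mul1g.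
  by move=> p; apply: coord_cons_neq.
case: w push => [|c w] push //.
case E: (prj c) => [b|]; last exact: push.
exists w; split=> [|p ne]; last first.
  by rewrite [RHS]coord_cons_neq //; case: eqP => _; rewrite ?coord_cons_neq.
by case: eqP => [e|_]; rewrite /= eqxx ?coord_self E ?prjK ?e.
Qed.

Lemma coord_mulw_other (H' : groupType) (prj' : letter G1 G2 -> option H') :
  (forall a, prj' (inj a) = None) ->
  forall w s p, coord prj' p (mulw w s) = coord prj' p w.
Proof.
move=> prj'_inj w s p; rewrite /mulw; case: eqP => // _.
case: w => [|c w]; first by rewrite coord_cons_none.
case E: (prj c) => [b|]; last by rewrite coord_cons_none.
by rewrite (prj_someK E) coord_cons_none //; case: eqP; rewrite ?coord_cons_none.
Qed.

Lemma mulw_nil_inj : injective (mulw [::]).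
Proof.
move=> a b; rewrite /mulw.
case: eqP => [->|_]; case: eqP => [->|_] // [] /(congr1 prj).
by rewrite !prjK => -[].
Qed.

Definition mulw_rword a (x : rword G1 G2) : rword G1 G2 :=
  exist _ (mulw (val x) a) (reduced_mulw a (valP x)).

Lemma mulw_rwordM a b x : mulw_rword (a * b) x = mulw_rword b (mulw_rword a x).
Proof. by apply: val_inj; rewrite /= mulwM ?(valP x). Qed.

Lemma mulw_rword1 x : mulw_rword 1 x = x.
Proof. by apply: val_inj; rewrite /= mulw1. Qed.

Lemma mulw_rwordK a : cancel (mulw_rword a) (mulw_rword a^-1).
Proof. by move=> x; rewrite -mulw_rwordM mulgV mulw_rword1. Qed.

Lemma mulw_rwordVK a : cancel (mulw_rword a^-1) (mulw_rword a).
Proof. by move=> x; rewrite -mulw_rwordM mulVg mulw_rword1. Qed.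

Definition mulw_bij a : bij (rword G1 G2) := Bij (mulw_rwordK a) (mulw_rwordVK a).

Lemma mulw_bij_morphism : monoid.monoid_morphism mulw_bij.
Proof.
split; first by apply: bij_eq => x /=; rewrite mulw_rword1.
by move=> a b; apply: bij_eq => x /=; rewrite mulw_rwordM.
Qed.

End FactorAction.

Notation mulw_inl := (mulw inl prj1).
Notation mulw_inr := (mulw inr prj2).

(** * Normal forms in a free product *)

Section NormalForm.
Local Open Scope group_scope.
Variables (G1 G2 G : groupType) (i1 : G1 -> G) (i2 : G2 -> G).
Hypothesis freeG : is_free_product i1 i2.

Lemma i1_morphism : monoid.monoid_morphism i1. Proof. by case: freeG. Qed.
Lemma i2_morphism : monoid.monoid_morphism i2. Proof. by case: freeG => _ []. Qed.

Lemma free_product_morphism_eq (H : groupType) (f f' : G -> H) :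
  monoid.monoid_morphism f -> monoid.monoid_morphism f' ->
  f \o i1 =1 f' \o i1 -> f \o i2 =1 f' \o i2 -> f = f'.
Proof.
move=> fm f'm e1 e2; have [m1 [m2 U]] := freeG.
have [F [_ uF]] := U _ _ _ (monoid_morphism_comp m1 fm) (monoid_morphism_comp m2 fm).
have agree g : monoid.monoid_morphism g ->
    g \o i1 =1 f \o i1 -> g \o i2 =1 f \o i2 -> F = g.
  by move=> gm g1 g2; apply: uF.
by rewrite -(agree f) // (agree f') // => x; rewrite /= ?e1 ?e2.
Qed.

Definition eval_letter (l : letter G1 G2) : G :=
  match l with inl a => i1 a | inr b => i2 b end.

Fixpoint eval_word (w : seq (letter G1 G2)) : G :=
  if w is c :: w' then eval_word w' * eval_letter c else 1.

Lemma eval_mulw (H : groupType) (inj : H -> letter G1 G2) prj (i : H -> G) :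
    monoid.monoid_morphism i ->
    (forall l a, prj l = Some a -> eval_letter l = i a) ->
    (forall a, eval_letter (inj a) = i a) ->
  forall w a, eval_word (mulw inj prj w a) = eval_word w * i a.
Proof.
move=> [i1' iM] eval_prj eval_inj w a; rewrite /mulw.
case: eqP => [->|_]; first by rewrite i1' mulg1.
case: w => [|c w] /=; first by rewrite eval_inj.
case E: (prj c) => [b|] /=; last by rewrite eval_inj.
rewrite (eval_prj _ _ E) -mulgA -iM.
by case: eqP => [->|_] /=; rewrite ?i1' ?mulg1 ?eval_inj.
Qed.

Lemma eval_mulw_inl w a : eval_word (mulw_inl w a) = eval_word w * i1 a.
Proof. by apply: (eval_mulw i1_morphism) => [[] ? ? //= [->]|]. Qed.

Lemma eval_mulw_inr w b : eval_word (mulw_inr w b) = eval_word w * i2 b.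
Proof. by apply: (eval_mulw i2_morphism) => [[] ? ? //= [->]|]. Qed.

Definition mulw_bij1 := mulw_bij (@prj1K G1 G2) (@prj1_someK G1 G2)
  (@nontrivial_inl G1 G2) (@same_factor_inl G1 G2).
Definition mulw_bij2 := mulw_bij (@prj2K G1 G2) (@prj2_someK G1 G2)
  (@nontrivial_inr G1 G2) (@same_factor_inr G1 G2).

Lemma word_action_exists : exists phi : G -> bij (rword G1 G2),
  monoid.monoid_morphism phi /\
  (forall a, phi (i1 a) = mulw_bij1 a) /\ (forall b, phi (i2 b) = mulw_bij2 b).
Proof.
have [_ [_ U]] := freeG.
have m1 : monoid.monoid_morphism mulw_bij1 by apply: mulw_bij_morphism.
have m2 : monoid.monoid_morphism mulw_bij2 by apply: mulw_bij_morphism.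
by have [f [Hf _]] := U _ _ _ m1 m2; exists f.
Qed.

Definition word_action := projT1 (cid word_action_exists).
Let word_actionP := projT2 (cid word_action_exists).

Definition actw (x : rword G1 G2) (g : G) := bij_fun (word_action g) x.

Lemma actw1 x : actw x 1 = x.
Proof. by rewrite /actw /word_action; case: word_actionP => [[-> _] _]. Qed.

Lemma actwM x g h : actw x (g * h) = actw (actw x g) h.
Proof. by rewrite /actw /word_action; case: word_actionP => [[_ ->] _]. Qed.

Lemma actw_i1 x a : val (actw x (i1 a)) = mulw_inl (val x) a.
Proof. by rewrite /actw /word_action; case: word_actionP => _ [-> _]. Qed.

Lemma actw_i2 x b : val (actw x (i2 b)) = mulw_inr (val x) b.
Proof. by rewrite /actw /word_action; case: word_actionP => _ [_ ->]. Qed.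

Lemma actwK g : cancel (actw^~ g) (actw^~ g^-1).
Proof. by move=> x; rewrite -actwM mulgV actw1. Qed.

Section Cocycle.
Variable c : rword G1 G2 -> G -> G.
Hypotheses (c1 : forall x, c x 1 = 1)
  (cM : forall x g h, c x (g * h) = c x g * c (actw x g) h).

Definition cocycle_fun g (xy : rword G1 G2 * G) := (actw xy.1 g, xy.2 * c xy.1 g).

Lemma cocycle_funK g : cancel (cocycle_fun g) (cocycle_fun g^-1).
Proof. by case=> x y; rewrite /cocycle_fun /= actwK -mulgA -cM mulgV c1 mulg1. Qed.

Lemma cocycle_funVK g : cancel (cocycle_fun g^-1) (cocycle_fun g).
Proof. by rewrite -{2}[g]invgK; apply: cocycle_funK. Qed.

Definition cocycle_bij g := Bij (cocycle_funK g) (cocycle_funVK g).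

Lemma cocycle_bij_morphism : monoid.monoid_morphism cocycle_bij.
Proof.
split=> [|g h]; apply: bij_eq => -[x y] /=; rewrite /cocycle_fun /=.
  by rewrite actw1 c1 mulg1.
by rewrite actwM cM mulgA.
Qed.

End Cocycle.

Definition eval_rword (x : rword G1 G2) := eval_word (val x).

(* The cocycles [g] and [eval x^-1 * eval (x.g)] yield two morphisms to the
   bijections of [rword * G] that agree on both factors, hence coincide. *)
Lemma eval_actw x g : eval_rword (actw x g) = eval_rword x * g.
Proof.
pose c' x g := (eval_rword x)^-1 * eval_rword (actw x g).
have c'1 y : c' y 1 = 1 by rewrite /c' actw1 mulVg.
have c'M y h k : c' y (h * k) = c' y h * c' (actw y h) k.
  by rewrite /c' actwM !mulgA mulgK.
pose shift (_ : rword G1 G2) (g : G) := g.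
have s1 y : shift y 1 = 1 by [].
have sM y h k : shift y (h * k) = shift y h * shift (actw y h) k by [].
have e : cocycle_bij s1 sM = cocycle_bij c'1 c'M.
  apply: free_product_morphism_eq; try exact: cocycle_bij_morphism.
    move=> a; apply: bij_eq => -[y z].
    by rewrite /= /cocycle_fun /= /c' /eval_rword actw_i1 eval_mulw_inl mulKg.
  move=> b; apply: bij_eq => -[y z].
  by rewrite /= /cocycle_fun /= /c' /eval_rword actw_i2 eval_mulw_inr mulKg.
have := congr1 (fun F => (bij_fun (F g) (x, 1)).2) e.
by rewrite /= /cocycle_fun /= /shift /c' !mul1g => {2}->; rewrite mulVKg.
Qed.

Definition nf (g : G) := val (actw (rword_nil G1 G2) g).

Lemma nf_reduced g : reduced (nf g). Proof. exact: valP. Qed.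

Lemma eval_nf g : eval_word (nf g) = g.
Proof. by have := eval_actw (rword_nil G1 G2) g; rewrite /eval_rword /= mul1g. Qed.

Lemma nf1 : nf 1 = [::]. Proof. by rewrite /nf actw1. Qed.

Lemma nf_mul_i1 g a : nf (g * i1 a) = mulw_inl (nf g) a.
Proof. by rewrite /nf actwM actw_i1. Qed.

Lemma nf_mul_i2 g b : nf (g * i2 b) = mulw_inr (nf g) b.
Proof. by rewrite /nf actwM actw_i2. Qed.

Lemma nf_inj : injective nf.
Proof. by move=> g h e; rewrite -(eval_nf g) -(eval_nf h) e. Qed.

Lemma i1_inj : injective i1.
Proof.
move=> a b /(congr1 nf); rewrite -[i1 a]mul1g -[i1 b]mul1g !nf_mul_i1 nf1.
exact: (mulw_nil_inj (@prj1K _ _)).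
Qed.

Lemma i2_inj : injective i2.
Proof.
move=> a b /(congr1 nf); rewrite -[i2 a]mul1g -[i2 b]mul1g !nf_mul_i2 nf1.
exact: (mulw_nil_inj (@prj2K _ _)).
Qed.

End NormalForm.

(** * The word metric of a free product *)

Definition free_product_gens (G1 G2 G : groupType) (i1 : G1 -> G) (i2 : G2 -> G)
    (S1 : G1 -> Prop) (S2 : G2 -> Prop) (g : G) : Prop :=
  (exists s, S1 s /\ g = i1 s) \/ (exists s, S2 s /\ g = i2 s).

Section FreeProductDistance.
Local Open Scope group_scope.
Variables (G1 G2 G : groupType) (i1 : G1 -> G) (i2 : G2 -> G).
Hypothesis freeG : is_free_product i1 i2.
Variables (S1 : G1 -> Prop) (S2 : G2 -> Prop).
Hypotheses (genS1 : generates S1) (genS2 : generates S2).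

Local Notation S := (free_product_gens i1 i2 S1 S2).
Local Notation word := (seq (letter G1 G2)).
Local Notation nf := (nf freeG).
Local Notation eval_word := (eval_word i1 i2).

Definition suffix_dist (p x y : word) : nat :=
  cay_dist S1 (coord prj1 p x) (coord prj1 p y) +
  cay_dist S2 (coord prj2 p x) (coord prj2 p y).

Definition suffix_dist_sum (L : seq word) x y := \sum_(p <- L) suffix_dist p x y.

Definition word_dist x y := suffix_dist_sum (undup (suffixes x ++ suffixes y)) x y.

Lemma suffix_dist_out p x y :
  p \notin suffixes x ++ suffixes y -> suffix_dist p x y = 0%N.
Proof.
rewrite mem_cat negb_or => /andP [nx ny].
by rewrite /suffix_dist !coord_notin // !cay_dist_xx.
Qed.

Lemma suffix_dist_sumE L x y : uniq L -> {subset suffixes x ++ suffixes y <= L} ->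
  suffix_dist_sum L x y = word_dist x y.
Proof.
move=> uL sub; apply: big_subset_seq; rewrite ?undup_uniq // => p.
  by rewrite mem_undup; apply: sub.
by rewrite mem_undup; apply: suffix_dist_out.
Qed.

Lemma suffix_dist_sum_triangle L x y z :
  (suffix_dist_sum L x z <= suffix_dist_sum L x y + suffix_dist_sum L y z)%N.
Proof.
rewrite /suffix_dist_sum -big_split /=; apply: leq_sum => p _.
by rewrite addnACA leq_add ?cay_dist_triangle.
Qed.

Lemma word_dist_sym x y : word_dist x y = word_dist y x.
Proof.
rewrite -[RHS](@suffix_dist_sumE (undup (suffixes x ++ suffixes y))) ?undup_uniq //.
  apply: eq_bigr => p _.
  by rewrite /suffix_dist cay_dist_sym [cay_dist S2 _ _]cay_dist_sym.
by move=> p; rewrite mem_undup !mem_cat orbC.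
Qed.

Lemma word_dist_xx x : word_dist x x = 0%N.
Proof.
by rewrite /word_dist /suffix_dist_sum big1 // => p _; rewrite /suffix_dist !cay_dist_xx.
Qed.

Lemma word_dist_mulw_inl w s : (forall g, cay_dist S1 g (g * s) <= 1)%N ->
  (word_dist w (mulw_inl w s) <= 1)%N.
Proof.
move=> ds; have [p0 [e0 e]] := coord_mulw (@prj1K G1 G2) w s.
have other p := coord_mulw_other (@prj1_someK G1 G2) (@prj2_inl G1 G2) w s p.
rewrite /word_dist /suffix_dist_sum (@big_seq_only _ _ _ _ _ _ p0) ?undup_uniq //.
  by case: ifP => // _; rewrite /suffix_dist e0 other cay_dist_xx addn0.
by move=> p ne; rewrite /suffix_dist e // other !cay_dist_xx.
Qed.

Lemma word_dist_mulw_inr w s : (forall g, cay_dist S2 g (g * s) <= 1)%N ->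
  (word_dist w (mulw_inr w s) <= 1)%N.
Proof.
move=> ds; have [p0 [e0 e]] := coord_mulw (@prj2K G1 G2) w s.
have other p := coord_mulw_other (@prj2_someK G1 G2) (@prj1_inr G1 G2) w s p.
rewrite /word_dist /suffix_dist_sum (@big_seq_only _ _ _ _ _ _ p0) ?undup_uniq //.
  by case: ifP => // _; rewrite /suffix_dist e0 other cay_dist_xx add0n.
by move=> p ne; rewrite /suffix_dist e // other !cay_dist_xx.
Qed.

Lemma word_dist_adj g h : cay_adj S g h -> (word_dist (nf g) (nf h) <= 1)%N.
Proof.
case=> _ [t [[[s [Ss ->]] | [s [Ss ->]]] E]].
  case: E => ->; rewrite -?(monoid_morphismV (i1_morphism freeG)) nf_mul_i1;
    by apply: word_dist_mulw_inl => u; case: (cay_dist_mul_le1 u Ss).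
case: E => ->; rewrite -?(monoid_morphismV (i2_morphism freeG)) nf_mul_i2;
  by apply: word_dist_mulw_inr => u; case: (cay_dist_mul_le1 u Ss).
Qed.

Lemma word_dist_nf_le g h n : cay_walk_len S g h n -> (word_dist (nf g) (nf h) <= n)%N.
Proof.
elim: n g => [|n IH] g; first by move/cay_walk_len0E->; rewrite word_dist_xx.
case/cay_walk_lenSE=> z [a w].
pose L := undup (suffixes (nf g) ++ suffixes (nf z) ++ suffixes (nf h)).
have sumE x y : {subset suffixes x <= L} -> {subset suffixes y <= L} ->
    suffix_dist_sum L x y = word_dist x y.
  move=> sx sy; apply: suffix_dist_sumE; rewrite ?undup_uniq // => p.
  by rewrite mem_cat => /orP [/sx|/sy].
have sg : {subset suffixes (nf g) <= L} by move=> p pg; rewrite mem_undup !mem_cat pg.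
have sz : {subset suffixes (nf z) <= L}.
  by move=> p pz; rewrite mem_undup !mem_cat pz orbT.
have sh : {subset suffixes (nf h) <= L}.
  by move=> p ph; rewrite mem_undup !mem_cat ph !orbT.
rewrite -(sumE _ _ sg sh) -add1n.
apply: leq_trans (suffix_dist_sum_triangle L _ (nf z) _) _.
by rewrite (sumE _ _ sg sz) (sumE _ _ sz sh) leq_add ?word_dist_adj ?IH.
Qed.

Section ConsBound.
Variables (H : groupType) (SH : H -> Prop) (i : H -> G).
Variables (inj : H -> letter G1 G2) (prj : letter G1 G2 -> option H).
Variable other : word -> word -> word -> nat.
Hypotheses (genSH : generates SH) (i_1 : i 1 = 1)
  (walk_i : forall g a b n, cay_walk_len SH a b n -> cay_walk_len S (g * i a) (g * i b) n)
  (eval_inj : forall a, eval_letter i1 i2 (inj a) = i a)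
  (prjK : forall a, prj (inj a) = Some a)
  (prj_someK : forall l a, prj l = Some a -> l = inj a)
  (suffix_distE : forall p x y,
     suffix_dist p x y = (cay_dist SH (coord prj p x) (coord prj p y) + other p x y)%N)
  (other_cons : forall a p y, other p (inj a :: p) y = other p p y).

Lemma word_dist_cons a x y : exists R,
  word_dist (inj a :: x) y = (cay_dist SH a (coord prj x y) + other x x y + R)%N /\
  word_dist x y = (cay_dist SH 1 (coord prj x y) + other x x y + R)%N.
Proof.
pose L := undup (suffixes (inj a :: x) ++ suffixes y).
have uL : uniq L by apply: undup_uniq.
have xL : x \in L by rewrite mem_undup mem_cat mem_head.
exists (\sum_(p <- L | p != x) suffix_dist p x y); split.
  rewrite /word_dist /suffix_dist_sum (bigD1_seq x) //= suffix_distE other_cons.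
  rewrite /= eqxx prjK; congr (_ + _); apply: eq_bigr => p ne.
  by rewrite /suffix_dist !coord_cons_neq.
rewrite -(@suffix_dist_sumE L) // => [|p]; last first.
  by rewrite mem_undup !mem_cat /= inE => /orP [->|->]; rewrite ?orbT.
by rewrite /suffix_dist_sum (bigD1_seq x) //= suffix_distE coord_self.
Qed.

Lemma word_dist_cons_bound a x y m : (size y <= (size x).+1)%N ->
    (m <= word_dist x y)%N -> cay_walk_len S (eval_word x) (eval_word y) m ->
  exists2 m', (m' <= word_dist (inj a :: x) y)%N &
    cay_walk_len S (eval_word (inj a :: x)) (eval_word y) m'.
Proof.
move=> szy le w; have [R [-> Ex]] := word_dist_cons a x y; rewrite Ex in le.
rewrite /= eval_inj; have [c1|] := eqVneq (coord prj x y) 1.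
  exists (cay_dist SH a 1 + m)%N.
    by rewrite c1 -!addnA leq_add2l; rewrite c1 cay_dist_xx in le.
  apply: cay_walk_len_trans w; rewrite -[X in cay_walk_len _ _ X _]mulg1 -i_1.
  by apply: walk_i; apply: cay_dist_walk.
case/coord_neq1=> u [c [ey /prj_someK ec]].
exists (cay_dist SH a (coord prj x y)); first by rewrite -addnA leq_addr.
have u0 : u = [::].
  case: u ey szy => // d u ->.
  by rewrite size_cat /= addnS ltnS -[X in (_ <= X)%N]add0n leq_add2r.
have -> : eval_word y = eval_word x * i (coord prj x y).
  by rewrite {1}ey u0 ec /= eval_inj.
by apply: walk_i; apply: cay_dist_walk.
Qed.

End ConsBound.

Lemma cay_walk_len_i1 g a b n :
  cay_walk_len S1 a b n -> cay_walk_len S (g * i1 a) (g * i1 b) n.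
Proof.
apply: cay_walk_len_morph (i1_morphism freeG) (i1_inj freeG) _ _ _ _ _.
by move=> s Ss; left; exists s.
Qed.

Lemma cay_walk_len_i2 g a b n :
  cay_walk_len S2 a b n -> cay_walk_len S (g * i2 a) (g * i2 b) n.
Proof.
apply: cay_walk_len_morph (i2_morphism freeG) (i2_inj freeG) _ _ _ _ _.
by move=> s Ss; right; exists s.
Qed.

Lemma word_dist_walk n x y : reduced x -> reduced y -> (size x + size y <= n)%N ->
  exists2 m, (m <= word_dist x y)%N & cay_walk_len S (eval_word x) (eval_word y) m.
Proof.
elim: n x y => [|n IH] x y rx ry.
  by case: x y {rx ry} => [|? ?] [|? ?] //= _; exists 0%N => //; apply: cay_walk_len0.
wlog le : x y rx ry / (size y <= size x)%N.
  move=> wl sz; have [le|lt] := leqP (size y) (size x); first exact: wl.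
  have [|m le w] := wl y x ry rx (ltnW lt); first by rewrite addnC.
  by exists m; [rewrite word_dist_sym | apply: cay_walk_len_sym].
case: x rx le => [|c x] rx le sz.
  by case: y {ry sz} le => // _; exists 0%N => //; apply: cay_walk_len0.
have [|m le' w] := IH x y (reduced_behead rx) ry; first by move: sz; rewrite addSn.
case: c {rx sz} le => a le.
  apply: (word_dist_cons_bound (SH := S1) (i := i1) (other := fun p x y =>
    cay_dist S2 (coord prj2 p x) (coord prj2 p y))) le' w => //.
  - by case: (i1_morphism freeG).
  - exact: cay_walk_len_i1.
  - exact: prj1K.
  - exact: prj1_someK.
  - by move=> b p z; rewrite coord_cons_none.
apply: (word_dist_cons_bound (SH := S2) (i := i2) (other := fun p x y =>
  cay_dist S1 (coord prj1 p x) (coord prj1 p y))) le' w => //.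
- by case: (i2_morphism freeG).
- exact: cay_walk_len_i2.
- exact: prj2K.
- exact: prj2_someK.
- by move=> p x' y'; rewrite addnC.
- by move=> b p z; rewrite coord_cons_none.
Qed.

Lemma cay_dist_nf g h : cay_dist S g h = word_dist (nf g) (nf h).
Proof.
have [m le w] := word_dist_walk (nf_reduced freeG g) (nf_reduced freeG h) (leqnn _).
rewrite !eval_nf in w.
have [wd _] := cay_dist_spec (ex_intro _ m w).
by apply/eqP; rewrite eqn_leq (leq_trans (cay_dist_min w) le) (word_dist_nf_le wd).
Qed.

End FreeProductDistance.

(** * Quadratic forms *)

Local Open Scope ring_scope.

Lemma sumr_seq_lt0 (R : numDomainType) (I : eqType) (L : seq I) (F : I -> R) p :
  uniq L -> p \in L -> F p < 0 -> (forall q, F q <= 0) -> \sum_(q <- L) F q < 0.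
Proof.
move=> uL pL Fp F0; rewrite (bigD1_seq p) //=.
by apply: ltr_wnDr Fp; apply: sumr_le0.
Qed.

Definition kernelC (T : Type) (K : T -> T -> Rdefinitions.R) (x y : T) : CC :=
  real_complex Rdefinitions.R (K x y).

Definition quad_form (T : Type) (K : T -> T -> CC) (lam : T -> CC) (s : seq T) : CC :=
  \sum_(x <- s) \sum_(y <- s) lam x * (lam y)^* * K x y.

Lemma eq_quad_form (T : eqType) (K K' : T -> T -> CC) lam s :
  {in s &, K =2 K'} -> quad_form K lam s = quad_form K' lam s.
Proof.
by move=> eK; apply: eq_big_seq => x xs; apply: eq_big_seq => y ys; rewrite eK.
Qed.

Lemma quad_form_sum (T I : Type) (L : seq I) (K : I -> T -> T -> CC) lam s :
  quad_form (fun x y => \sum_(p <- L) K p x y) lam s =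
  \sum_(p <- L) quad_form (K p) lam s.
Proof.
rewrite /quad_form; under eq_bigr => x _ do under eq_bigr => y _ do rewrite mulr_sumr.
by under eq_bigr => x _ do rewrite exchange_big; rewrite exchange_big.
Qed.

Lemma quad_formD (T : Type) (K K' : T -> T -> CC) lam s :
  quad_form (fun x y => K x y + K' x y) lam s = quad_form K lam s + quad_form K' lam s.
Proof.
rewrite /quad_form -big_split; apply: eq_bigr => x _.
by rewrite -big_split; apply: eq_bigr => y _; rewrite mulrDr.
Qed.

Section Pushforward.
Variables (T U : eqType) (f : T -> U) (lam : T -> CC) (s : seq T).

Definition pushforward (a : U) : CC := \sum_(x <- s | f x == a) lam x.

Local Notation image := (undup (map f s)).

Lemma sum_pushforward_mul (F : U -> CC) :
  \sum_(x <- s) lam x * F (f x) = \sum_(a <- image) pushforward a * F a.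
Proof.
rewrite (partition_big_undup _ f); apply: eq_bigr => a _.
by rewrite /pushforward mulr_suml; apply: eq_bigr => x /eqP ->.
Qed.

Lemma sum_pushforward : \sum_(a <- image) pushforward a = \sum_(x <- s) lam x.
Proof.
symmetry; transitivity (\sum_(x <- s) lam x * 1).
  by apply: eq_bigr => x _; rewrite mulr1.
by rewrite (sum_pushforward_mul (fun _ => 1)); apply: eq_bigr => a _; rewrite mulr1.
Qed.

Lemma pushforward_out a : a \notin image -> pushforward a = 0.
Proof.
rewrite mem_undup => na; rewrite /pushforward big_seq_cond big_pred0 // => x.
by apply/negP => /andP [xs /eqP fx]; move: na; rewrite -fx map_f.
Qed.

Lemma quad_form_pushforward (K : U -> U -> CC) :
  quad_form (fun x y => K (f x) (f y)) lam s = quad_form K pushforward image.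
Proof.
have conj_push a : \sum_(x <- s | f x == a) (lam x)^* = (pushforward a)^*.
  by rewrite rmorph_sum.
rewrite /quad_form; under eq_bigr => x _ do under eq_bigr => y _ do rewrite -mulrA.
under eq_bigr => x _ do rewrite -mulr_sumr.
rewrite (sum_pushforward_mul (fun a => \sum_(y <- s) (lam y)^* * K a (f y))).
apply: eq_bigr => a _; rewrite mulr_sumr (partition_big_undup _ f).
apply: eq_bigr => b _; rewrite -conj_push mulr_sumr mulr_suml.
by apply: eq_bigr => y /eqP ->; rewrite mulrA.
Qed.

Lemma quad_form_pushforward_le0 (K : U -> U -> Rdefinitions.R) :
  cond_strict_neg_def K -> \sum_(x <- s) lam x = 0 ->
  quad_form (fun x y => kernelC K (f x) (f y)) lam s <= 0.
Proof.
move=> hK s0; rewrite quad_form_pushforward.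
have [[a ne0]|all0] := pselect (exists a, pushforward a != 0).
  apply/ltW/(proj2 hK); rewrite ?undup_uniq ?sum_pushforward //.
    exact: pushforward_out.
  by exists a.
rewrite /quad_form big1 // => a _; rewrite big1 // => b _.
have -> : pushforward a = 0 by apply/eqP/negPn/negP => ne; apply: all0; exists a.
by rewrite !mul0r.
Qed.

Lemma quad_form_pushforward_lt0 (K : U -> U -> Rdefinitions.R) a :
  cond_strict_neg_def K -> \sum_(x <- s) lam x = 0 -> pushforward a != 0 ->
  quad_form (fun x y => kernelC K (f x) (f y)) lam s < 0.
Proof.
move=> hK s0 ne0; rewrite quad_form_pushforward.
apply: (proj2 hK); rewrite ?undup_uniq ?sum_pushforward //; last by exists a.
exact: pushforward_out.
Qed.

End Pushforward.

Section FreeProductQuadForm.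
Variables (G1 G2 G : groupType) (i1 : G1 -> G) (i2 : G2 -> G).
Hypothesis freeG : is_free_product i1 i2.
Variables (S1 : G1 -> Prop) (S2 : G2 -> Prop).
Hypotheses (genS1 : generates S1) (genS2 : generates S2).

Local Notation S := (free_product_gens i1 i2 S1 S2).
Local Notation nf := (nf freeG).

Definition suffix_quad lam s p :=
  quad_form (fun x y =>
    kernelC (cay_metric S1) (coord prj1 p (nf x)) (coord prj1 p (nf y))) lam s +
  quad_form (fun x y =>
    kernelC (cay_metric S2) (coord prj2 p (nf x)) (coord prj2 p (nf y))) lam s.

Lemma quad_form_cay_metric lam s L : uniq L ->
    (forall x, x \in s -> {subset suffixes (nf x) <= L}) ->
  quad_form (kernelC (cay_metric S)) lam s = \sum_(p <- L) suffix_quad lam s p.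
Proof.
move=> uL sL; rewrite /suffix_quad; under eq_bigr do rewrite -quad_formD.
rewrite -quad_form_sum.
apply: eq_quad_form => x y xs ys.
rewrite /kernelC /cay_metric (cay_dist_nf freeG genS1 genS2).
rewrite -(suffix_dist_sumE S1 S2 (L := L)) //.
  rewrite /suffix_dist_sum natr_sum rmorph_sum.
  by apply: eq_bigr => p _; rewrite natrD rmorphD.
by move=> p; rewrite mem_cat => /orP [/(sL x xs)|/(sL y ys)].
Qed.

Lemma pushforward_top (H : groupType) (inj : H -> letter G1 G2) prj
    (prjK : forall a, prj (inj a) = Some a)
    (prj_someK : forall l a, prj l = Some a -> l = inj a)
    (nontrivial_inj : forall a, nontrivial_letter (inj a) = (a != 1%g))
    lam s x p a :
    uniq s -> (forall y, y \notin s -> lam y = 0) -> x \in s -> nf x = inj a :: p ->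
    {in s, forall y, lam y != 0 -> (size (nf y) <= size (nf x))%N} ->
  pushforward (fun y => coord prj p (nf y)) lam s a = lam x.
Proof.
move=> us out xs ex mx.
have a1 : a != 1%g.
  by have := nf_reduced freeG x; rewrite ex /= nontrivial_inj => /and3P [].
rewrite /pushforward big_mkcond (@big_seq_only _ _ _ _ _ _ x) // => [|y ne].
  by rewrite xs ex /= eqxx prjK eqxx.
case: eqP => // ey; have [ly|ly] := eqVneq (lam y) 0 => //.
have ys : y \in s by apply: contraTT ly => /out ->; rewrite eqxx.
have [|u [c [eny ec]]] := coord_neq1 (prj := prj) (p := p) (w := nf y).
  by rewrite ey.
have := mx y ys ly; rewrite ey in ec; rewrite eny ex size_cat /=.
case: u eny => [|d u] eny; last by rewrite addSn ltnNge leq_addl.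
by move: ne; rewrite (nf_inj (_ : nf y = nf x)) ?eqxx // eny ex (prj_someK _ _ ec).
Qed.

Hypotheses (cnd1 : cond_strict_neg_def (cay_metric S1))
  (cnd2 : cond_strict_neg_def (cay_metric S2)).

Lemma suffix_quad_le0 lam s p : \sum_(x <- s) lam x = 0 -> suffix_quad lam s p <= 0.
Proof. by move=> s0; rewrite /suffix_quad -[0]addr0 lerD ?quad_form_pushforward_le0. Qed.

Lemma suffix_quad_lt0 lam s : uniq s -> (forall x, x \notin s -> lam x = 0) ->
    (exists x, lam x != 0) -> \sum_(x <- s) lam x = 0 ->
  exists2 x, x \in s & exists2 p, p \in suffixes (nf x) & suffix_quad lam s p < 0.
Proof.
move=> us out [x0 nz0] s0.
have x0s : x0 \in [seq y <- s | lam y != 0].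
  by rewrite mem_filter nz0; apply: contraTT nz0 => /out ->; rewrite eqxx.
have [x] := seq_argmax (fun y => size (nf y)) x0s; rewrite mem_filter => /andP [lx xs] mx.
have {}mx : {in s, forall y, lam y != 0 -> (size (nf y) <= size (nf x))%N}.
  by move=> y ys ly; apply: mx; rewrite mem_filter ly.
case ex : (nf x) => [|c p].
  move: s0; rewrite (@big_seq_only _ _ _ _ _ _ x) // => [|y ne].
    by rewrite xs => /eqP; rewrite (negbTE lx).
  have [//|ly] := eqVneq (lam y) 0.
  have ys : y \in s by apply: contraTT ly => /out ->; rewrite eqxx.
  have := mx y ys ly; rewrite ex leqn0 => /nilP ey.
  by move: ne; rewrite (nf_inj (_ : nf y = nf x)) ?eqxx // ey ex.
exists x => //; exists p; first by rewrite ex mem_head.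
case: c ex => a ex.
  apply: ltr_wnDr (quad_form_pushforward_le0 _ cnd2 s0) _.
  apply: (quad_form_pushforward_lt0 (a := a) cnd1 s0).
  by rewrite (pushforward_top (@prj1K _ _) (@prj1_someK _ _) (@nontrivial_inl _ _)
    us out xs ex mx).
apply: ltr_wnDl (quad_form_pushforward_le0 _ cnd1 s0) _.
apply: (quad_form_pushforward_lt0 (a := a) cnd2 s0).
by rewrite (pushforward_top (@prj2K _ _) (@prj2_someK _ _) (@nontrivial_inr _ _)
  us out xs ex mx).
Qed.

End FreeProductQuadForm.

Theorem mainTheorem10
  (G1 G2 : groupType) (S1 : G1 -> Prop) (S2 : G2 -> Prop)
  (hS1 : generates S1) (hS2 : generates S2)
  (h1 : cond_strict_neg_def (cay_metric S1))
  (h2 : cond_strict_neg_def (cay_metric S2))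
  (G : groupType) (i1 : G1 -> G) (i2 : G2 -> G)
  (hG : is_free_product i1 i2) :
  cond_strict_neg_def
    (cay_metric (fun g : G => (exists s, S1 s /\ g = i1 s) \/ (exists s, S2 s /\ g = i2 s))).
Proof.
change (cond_strict_neg_def (cay_metric (free_product_gens i1 i2 S1 S2))).
split=> [x y|lam supp us out nz s0]; first by rewrite /cay_metric cay_dist_sym.
pose L := undup (flatten [seq suffixes (nf hG x) | x <- supp]).
have sL x : x \in supp -> {subset suffixes (nf hG x) <= L}.
  move=> xs p px; rewrite mem_undup; apply/flattenP.
  by exists (suffixes (nf hG x)) => //; apply: (map_f (fun x => suffixes (nf hG x))).
change (quad_form (kernelC (cay_metric (free_product_gens i1 i2 S1 S2))) lam supp < 0).
rewrite (quad_form_cay_metric hS1 hS2 lam (undup_uniq _) sL).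
have [x xs [p px lt0]] := suffix_quad_lt0 hG h1 h2 us out nz s0.
apply: sumr_seq_lt0 (undup_uniq _) (sL x xs p px) lt0 _ => q.
exact: suffix_quad_le0.
Qed.
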